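(* Let $S$ be an instance of 3-Partition (with $n_1\ge\cdots\ge n_{3m}$), let $1\le k\le 3m$, let $i_1,\dots,i_{3m-k+1}$ be natural numbers and $W=\prod_{j=1}^{3m-k+1}(a_1b^{i_j}a_2)$. Suppose there is an index $J$ with $i_J=\max_j\{i_j\}=n_k$. Let $i'_1,\dots,i'_{3m-k}$ be the sequence $\langle i_j\rangle_j$ with the entry $i_J$ omitted, and $W'=\prod_{j=1}^{3m-k}(a_1b^{i'_j}a_2)$. Then for every string $T$ there is a computation $$W\,\|\,v_{4k-1}E_kv_{4k-1}\,v_{4k}F_kv_{4k}\,T\;\vdash^*\;W'\,\|\,T.$$
   Context: Queue automaton: a configuration is written $Q\,\|\,x$ ($Q$ = queue contents, $x$ = remaining input); a step from $Q\,\|\,\sigma x$ ($\sigma$ a symbol) goes either to $Q\sigma\,\|\,x$ (push) or, if $Q=\sigma Q'$, to $Q'\,\|\,x$ (match/pop). $\vdash^*$ is zero or more steps. An instance of 3-Partition is a sequence $S=\langle n_i:1\le i\le 3m\rangle$ of natural numbers such that $B=(\sum_{i=1}^{3m}n_i)/m$ is an integer and $B/4<n_i<B/2$ for all $i$; throughout, the $n_i$ are in non-increasing order. Alphabet $\{a_1,a_2,b,e_0,e,c_1,c_2,x,y\}$; $u^i$ is $i$ copies of $u$ concatenated, $\prod_{\ell=1}^k u_\ell=u_1\cdots u_k$. Define $U_\ell=a_1^2b^\ell a_2^2$, $v_\ell=c_1x^\ell y^\ell c_2$, $E_k=U_B^{3m-k}\,a_1b^{n_k}a_2\,U_B^{3m-k}$,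 $F_k=U_B^{2(3m-k)}$. *)

From mathcomp Require Import all_boot.
Set Implicit Arguments. Unset Strict Implicit. Unset Printing Implicit Defensive.

Inductive sym := a1 | a2 | sb | se0 | se | c1 | c2 | sx | sy.

Definition word := list sym.

(* A configuration Q || w : queue contents Q (front = head), remaining input w. *)
Definition config := (word * word)%type.

Inductive qstep : config -> config -> Prop :=
| qpush (Q : word) (s : sym) (w : word) : qstep (Q, s :: w) (Q ++ [:: s], w)
| qpop (Q : word) (s : sym) (w : word) : qstep (s :: Q, s :: w) (Q, w).

Inductive qsteps : config -> config -> Prop :=
| qsteps_refl c : qsteps c c
| qsteps_step c1 c2 c3 : qstep c1 c2 -> qsteps c2 c3 -> qsteps c1 c3.

Definition rep (i : nat) (u : word) : word := flatten (nseq i u).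

Definition Uw (l : nat) : word := [:: a1; a1] ++ nseq l sb ++ [:: a2; a2].
Definition vw (l : nat) : word := [:: c1] ++ nseq l sx ++ nseq l sy ++ [:: c2].

(* 3-Partition instance: S = <n_1..n_{3m}> (as a 0-indexed list),
   B = (sum n_i)/m an integer, B/4 < n_i < B/2, and n_i non-increasing. *)
Definition three_partition (m B : nat) (S : seq nat) : Prop :=
  [/\ 0 < m, size S = 3 * m, sumn S = m * B,
      all (fun n => (B < 4 * n) && (2 * n < B)) S
    & sorted geq S].

(* n_k for 1-based k *)
Definition nk (S : seq nat) (k : nat) : nat := nth 0 S k.-1.

Definition Ew (m B : nat) (S : seq nat) (k : nat) : word :=
  rep (3 * m - k) (Uw B) ++ [:: a1] ++ nseq (nk S k) sb ++ [:: a2]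
      ++ rep (3 * m - k) (Uw B).
Definition Fw (m B : nat) (k : nat) : word := rep (2 * (3 * m - k)) (Uw B).

Definition Wblocks (ns : seq nat) : word :=
  flatten (map (fun i => [:: a1] ++ nseq i sb ++ [:: a2]) ns).

(* sequence with the (0-indexed) entry J omitted *)
Definition omit_at (J : nat) (ns : seq nat) : seq nat := take J ns ++ drop J.+1 ns.

From mathcomp Require Import all_boot.
From mathcomp Require Import zify.
Set Implicit Arguments. Unset Strict Implicit.

(* Reading U_B = a1^2 b^B a2^2 against a queue that starts with the block
   a1 b^i a2 (i <= B) can pop that block and push its complement a1 b^(B-i) a2;
   reading U_B again restores the block.  So E_k complements every block of W
   except the one of length n_k, which its middle part a1 b^(n_k) a2 pops
   outright, and pushes the copies of U_B it has no use for; F_k then restores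
   the complemented blocks and pops those copies. *)

Lemma qsteps_trans c1 c2 c3 : qsteps c1 c2 -> qsteps c2 c3 -> qsteps c1 c3.
Proof. by elim=> [//|d1 d2 d3 step _ IH] /IH; apply: qsteps_step step. Qed.

Definition qtrans (x p s : word) : Prop :=
  forall Q w, qsteps (p ++ Q, x ++ w) (Q ++ s, w).

Lemma qtrans_nil : qtrans [::] [::] [::].
Proof. by move=> Q w; rewrite cats0; apply: qsteps_refl. Qed.

Lemma qtrans_cat x1 p1 s1 x2 p2 s2 :
  qtrans x1 p1 s1 -> qtrans x2 p2 s2 -> qtrans (x1 ++ x2) (p1 ++ p2) (s1 ++ s2).
Proof.
move=> tr1 tr2 Q w; rewrite -!catA.
apply: qsteps_trans (tr1 (p2 ++ Q) (x2 ++ w)) _.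
by rewrite -catA; have := tr2 (Q ++ s1) w; rewrite -catA.
Qed.

Lemma qtrans_push u : qtrans u [::] u.
Proof.
elim: u => [|c u IH]; first exact: qtrans_nil.
apply: (qtrans_cat _ IH (x1 := [:: c]) (p1 := [::]) (s1 := [:: c])) => Q w.
exact: qsteps_step (qpush _ _ _) (qsteps_refl _).
Qed.

Lemma qtrans_pop u : qtrans u u [::].
Proof.
elim: u => [|c u IH]; first exact: qtrans_nil.
apply: (qtrans_cat _ IH (x1 := [:: c]) (p1 := [:: c]) (s1 := [::])) => Q w.
by rewrite cats0; apply: qsteps_step (qpop _ _ _) (qsteps_refl _).
Qed.

Lemma qtrans_rep (T : eqType) (u : word) (f g : T -> word) (l : seq T) :
  {in l, forall i, qtrans u (f i) (g i)} ->
  qtrans (rep (size l) u) (flatten (map f l)) (flatten (map g l)).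
Proof.
elim: l => [|i l IH] tr /=; first exact: qtrans_nil.
apply: qtrans_cat; first by apply: tr; rewrite mem_head.
by apply: IH => j lj; apply: tr; rewrite in_cons lj orbT.
Qed.

(* The whole queue is p, so the guard v pushed behind it comes back to the
   front exactly when x has finished. *)
Lemma qsteps_guarded v x p s w :
  qtrans x p s -> qsteps (p, v ++ x ++ v ++ w) (s, w).
Proof.
move=> tr; apply: qsteps_trans (qtrans_push v p (x ++ v ++ w)) _.
apply: qsteps_trans (tr v (v ++ w)) _.
by have := qtrans_pop v s w; rewrite cats0.
Qed.

Definition blk (i : nat) : word := [:: a1] ++ nseq i sb ++ [:: a2].

Lemma rep_add i j u : rep (i + j) u = rep i u ++ rep j u.
Proof. by rewrite /rep nseqD flatten_cat. Qed.

Lemma Wblocks_cat l1 l2 : Wblocks (l1 ++ l2) = Wblocks l1 ++ Wblocks l2.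
Proof. by rewrite /Wblocks map_cat flatten_cat. Qed.

Lemma Wblocks_cons i l : Wblocks (i :: l) = blk i ++ Wblocks l.
Proof. by []. Qed.

Lemma qtrans_Uw_blk B i : i <= B -> qtrans (Uw B) (blk i) (blk (B - i)).
Proof.
move=> le_iB.
have tr := qtrans_cat (qtrans_pop [:: a1]) (qtrans_cat (qtrans_push [:: a1])
  (qtrans_cat (qtrans_pop (nseq i sb)) (qtrans_cat (qtrans_push (nseq (B - i) sb))
  (qtrans_cat (qtrans_pop [:: a2]) (qtrans_push [:: a2]))))).
by move: tr; rewrite /Uw /= catA -nseqD subnKC.
Qed.

Lemma qtrans_Uw_complement B l : all (fun i => i <= B) l ->
  qtrans (rep (size l) (Uw B)) (Wblocks l) (Wblocks (map (subn B) l)).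
Proof.
move=> /allP le_lB; rewrite /Wblocks -map_comp.
by apply: qtrans_rep => i /le_lB; apply: qtrans_Uw_blk.
Qed.

Lemma qtrans_Uw_restore B l : all (fun i => i <= B) l ->
  qtrans (rep (size l) (Uw B)) (Wblocks (map (subn B) l)) (Wblocks l).
Proof.
move=> le_lB.
have le_clB : all (fun i => i <= B) (map (subn B) l).
  by apply/allP => i /mapP[j _ ->]; apply: leq_subr.
have involutive : map (subn B) (map (subn B) l) = l.
  rewrite -map_comp -[RHS]map_id; apply/eq_in_map => i /(allP le_lB).
  exact: subKn.
by have := qtrans_Uw_complement le_clB; rewrite size_map involutive.
Qed.

Section Removal.

Variables (B n : nat) (l1 l2 : seq nat).
Hypothesis le_lB : all (fun i => i <= B) (l1 ++ l2).

Definition Ek_residue : word :=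
  Wblocks (map (subn B) l1) ++ rep (size l2) (Uw B)
    ++ Wblocks (map (subn B) l2) ++ rep (size l1) (Uw B).

Let le_l1B : all (fun i => i <= B) l1.
Proof. by move: le_lB; rewrite all_cat => /andP[]. Qed.

Let le_l2B : all (fun i => i <= B) l2.
Proof. by move: le_lB; rewrite all_cat => /andP[]. Qed.

Lemma qtrans_Ew_shape :
  qtrans (rep (size l1 + size l2) (Uw B) ++ blk n ++ rep (size l1 + size l2) (Uw B))
         (Wblocks (l1 ++ n :: l2)) Ek_residue.
Proof.
have tr := qtrans_cat
  (qtrans_cat (qtrans_Uw_complement le_l1B) (qtrans_push (rep (size l2) (Uw B))))
  (qtrans_cat (qtrans_pop (blk n))
     (qtrans_cat (qtrans_Uw_complement le_l2B) (qtrans_push (rep (size l1) (Uw B))))).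
rewrite {2}(addnC (size l1)) !rep_add /Ek_residue Wblocks_cat Wblocks_cons.
by move: tr; rewrite !cats0 cat0s -!catA.
Qed.

Lemma qtrans_Fw_shape :
  qtrans (rep (2 * (size l1 + size l2)) (Uw B)) Ek_residue (Wblocks (l1 ++ l2)).
Proof.
have tr := qtrans_cat (qtrans_Uw_restore le_l1B)
  (qtrans_cat (qtrans_pop (rep (size l2) (Uw B)))
     (qtrans_cat (qtrans_Uw_restore le_l2B) (qtrans_pop (rep (size l1) (Uw B))))).
rewrite mul2n -addnn {2}(addnC (size l1)) !rep_add Wblocks_cat.
by move: tr; rewrite !cats0 -!catA.
Qed.
End Removal.

Lemma three_partition_le_bound m B S n : three_partition m B S -> n \in S -> n <= B.
Proof. by case=> _ _ _ /allP bounds _ /bounds /andP[_]; lia. Qed.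

Theorem lemma7 (m B : nat) (S : seq nat) (k : nat) (ns : seq nat) (J : nat) :
  three_partition m B S ->
  1 <= k <= 3 * m ->
  size ns = 3 * m - k + 1 ->
  J < size ns ->
  nth 0 ns J = nk S k ->
  (forall j, j < size ns -> nth 0 ns j <= nth 0 ns J) ->
  forall T : word,
    qsteps (Wblocks ns,
            vw (4 * k - 1) ++ Ew m B S k ++ vw (4 * k - 1)
              ++ vw (4 * k) ++ Fw m B k ++ vw (4 * k) ++ T)
           (Wblocks (omit_at J ns), T).
Proof.
move=> tp /andP[k_ge1 k_le] size_ns ltJ nJ maxJ T.
set l1 := take J ns; set l2 := drop J.+1 ns.
have ns_split : ns = l1 ++ nk S k :: l2 by rewrite -nJ -drop_nth // cat_take_drop.
have size_l : 3 * m - k = size l1 + size l2.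
  by move: size_ns; rewrite {1}ns_split size_cat /=; lia.
have nk_le_B : nk S k <= B.
  by apply: (three_partition_le_bound tp); rewrite mem_nth //; case: tp => _ -> *; lia.
have le_nsB : all (fun i => i <= B) ns.
  by apply/(all_nthP 0) => j /maxJ; rewrite nJ => /leq_trans; apply.
have le_lB : all (fun i => i <= B) (l1 ++ l2).
  by move: le_nsB; rewrite ns_split !all_cat /= => /and3P[-> _ ->].
have trE := qtrans_Ew_shape (nk S k) le_lB.
rewrite /blk -!catA -size_l -ns_split in trE.
have trF := qtrans_Fw_shape le_lB; rewrite -size_l in trF.
apply: qsteps_trans (qsteps_guarded _ _ trE) _.
exact: qsteps_guarded trF.
Qed.
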